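(* Let $H$ be a real symmetric $n\times n$ matrix and let $\lambda_1,\dotsc,\lambda_n$ be its eigenvalues, listed with multiplicity and in order of decreasing absolute value. Let $C\geq 1$ and $B\geq 1$, and suppose $|\lambda_1|\leq CB$. Put \[ N_H(B)=\#\{\vec{y}\in\mathbb{Z}^n:\ \|\vec{y}\|\leq B,\ \|H\vec{y}\|\leq B\}. \] Then there is a constant $A$ depending only on $C$ and $n$ such that \[ N_H(B)\leq A\min_{1\leq i\leq n}\frac{B^n}{1+|\lambda_1\cdots\lambda_i|}. \]
   Context: $\|\vec{t}\|=\max_i|t_i|$ denotes the supremum norm on $\mathbb{R}^n$. *)

From HB Require Import structures.
From mathcomp Require Import all_boot all_order all_algebra.
From mathcomp Require Import reals.
Set Implicit Arguments. Unset Strict Implicit. Unset Printing Implicit Defensive.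
Import Order.TTheory GRing.Theory Num.Theory.
Local Open Scope ring_scope.

Definition supnorm (R : realType) (n : nat) (v : 'cV[R]_n) : R :=
  \big[Num.max/0]_(i < n) `|v i ord0|.

Definition intvec (R : realType) (n : nat) (y : 'cV[int]_n) : 'cV[R]_n :=
  map_mx (fun z : int => z%:~R) y.

Definition int_box (n m : nat) : seq 'cV[int]_n :=
  undup [seq \col_i (((f i : nat)%:Z) - (m%:Z)) | f : {ffun 'I_n -> 'I_(m + m).+1}].

(* N_H(B) = #{ y in Z^n : ||y|| <= B, ||H y|| <= B }.  Every such y lies in the
   cube [-m, m]^n with m = truncn B, so counting inside that cube is exact. *)
Definition NH (R : realType) (n : nat) (H : 'M[R]_n) (B : R) : nat :=
  count (fun y : 'cV[int]_n =>
           (supnorm (intvec R y) <= B) && (supnorm (H *m intvec R y) <= B))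
        (int_box n (Num.truncn B)).

(* Put Q = C^2 I + H^2.  Every counted y satisfies y^T Q y <= n (C^2 + 1) B^2 =: r,
   so the counted points are lattice points of an ellipsoid.  Projecting away one
   coordinate at a time (Schur complements) shows that an ellipsoid y^T Q y <= r
   contains at most ((36 r)^n / det Q)^(1/2) lattice points, while
   det Q = prod_j (C^2 + lambda_j^2) dominates both 1 and (lambda_1 ... lambda_i)^2. *)

From HB Require Import structures.
From mathcomp Require Import all_boot all_order all_algebra.
From mathcomp Require Import reals ring lra zify.
Set Implicit Arguments.
Unset Strict Implicit.
Unset Printing Implicit Defensive.

Import Order.TTheory GRing.Theory Num.Theory.
Local Open Scope ring_scope.

Section CharPolyRoots.
Variables (R : comNzRingType) (n : nat).

Lemma char_poly_comp (A : 'M[R]_n) p :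
  char_poly A \Po p = \det (p%:M - map_mx polyC A).
Proof.
rewrite /char_poly -[_ \Po p]/(comp_poly p _) -det_map_mx; congr (\det _).
by apply/matrixP => i j; rewrite !mxE rmorphB rmorphMn /= comp_polyX comp_polyC.
Qed.

Variables (A : 'M[R]_n) (s : seq R).
Hypothesis charA : char_poly A = \prod_(x <- s) ('X - x%:P).

Lemma size_char_poly_roots : size s = n.
Proof. by have := size_char_poly A; rewrite charA size_prod_XsubC => -[]. Qed.

Lemma mxtrace_char_poly_roots : \tr A = \sum_(x <- s) x.
Proof.
have [n0|n_gt0] := posnP n.
  move: A charA size_char_poly_roots; rewrite n0 => A0 _.
  by case: s => // _; rewrite /mxtrace !big_ord0 big_nil.
apply: oppr_inj; rewrite -char_poly_trace // charA -size_char_poly_roots.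
by rewrite coefPn_prod_XsubC // size_char_poly_roots -lt0n.
Qed.

Lemma det_char_poly_roots : \det A = \prod_(x <- s) x.
Proof.
apply: (@lreg_sign _ n); rewrite -char_poly_det charA coef0_prod_XsubC.
by rewrite size_char_poly_roots.
Qed.

Lemma char_poly_addC c :
  char_poly (c%:M + A) = \prod_(x <- map (fun x => c + x) s) ('X - x%:P).
Proof.
have -> : char_poly (c%:M + A) = char_poly A \Po ('X - c%:P).
  rewrite char_poly_comp /char_poly /char_poly_mx map_mxD map_scalar_mx.
  by rewrite opprD addrA -raddfB.
rewrite charA -[_ \Po _]/(comp_poly _ _) rmorph_prod big_map; apply: eq_bigr => x _.
by rewrite /= comp_polyB comp_polyX comp_polyC polyCD opprD addrA.
Qed.

Lemma char_poly_sqr :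
  char_poly (A *m A) = \prod_(x <- map (fun x => x ^+ 2) s) ('X - x%:P).
Proof.
set Ap := map_mx polyC A.
have sqrA : char_poly (A *m A) \Po 'X^2 = char_poly A * \det ('X%:M + Ap).
  rewrite char_poly_comp map_mxM -/Ap /char_poly /char_poly_mx -/Ap -det_mulmx.
  congr (\det _).
  rewrite mulmxDr !mulmxBl -scalar_mxM -expr2 mul_mx_scalar mul_scalar_mx.
  by rewrite addrA subrK.
have oppA : \det ('X%:M + Ap) = \prod_(x <- s) ('X + x%:P).
  have -> : \det ('X%:M + Ap) = (-1) ^+ n * (char_poly A \Po (- 'X)).
    rewrite char_poly_comp -/Ap -detZ; congr (\det _).
    by rewrite scaleN1r opprB raddfN /= opprK addrC.
  rewrite charA -[_ \Po _]/(comp_poly _ _) rmorph_prod /=.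
  rewrite (eq_bigr (fun x => - ('X + x%:P))) => [|x _]; last first.
    by rewrite /= comp_polyB comp_polyX comp_polyC opprD.
  rewrite -size_char_poly_roots (big_nth 0) big_mkord prodrN card_ord mulrA.
  by rewrite -exprMn mulrNN mulr1 expr1n mul1r [RHS](big_nth 0) big_mkord.
have : char_poly (A *m A) \Po 'X^2 =
    (\prod_(x <- map (fun x => x ^+ 2) s) ('X - x%:P)) \Po 'X^2.
  rewrite big_map sqrA oppA charA -big_split -[_ \Po _]/(comp_poly _ _) rmorph_prod /=.
  apply: eq_bigr => x _; rewrite comp_polyB comp_polyX comp_polyC rmorphXn /=.
  by rewrite -subr_sqr.
move=> comp_eq; apply/polyP => i.
have := congr1 (fun p : {poly R} => p`_(2 * i)%N) comp_eq.
by rewrite /= !coef_comp_poly_Xn // dvdn_mulr // mulKn.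
Qed.

End CharPolyRoots.

Lemma size_le_fibers (R : numDomainType) (T U : eqType) (f : T -> U) (s : seq T)
    (m : R) :
  (forall u, (count (fun x => f x == u) s)%:R <= m) ->
  (size s)%:R <= (size (undup (map f s)))%:R * m.
Proof.
move=> fiber_le.
have -> : size s = (\sum_(u <- undup (map f s)) count (fun x => f x == u) s)%N.
  rewrite -(size_map f) -sum1_size -big_undup_iterop_count.
  by apply: eq_bigr => u _; rewrite Monoid.iteropE iter_addn_0 mul1n count_map.
rewrite natr_sum -(sum1_size (undup _)) natr_sum mulr_suml.
by apply: ler_sum => u _; rewrite mul1r.
Qed.

Lemma uniq_int_ball_size_le (R : archiRealFieldType) (zs : seq int) (c r : R) :
  0 <= r -> uniq zs -> (forall z, z \in zs -> `|z%:~R + c| <= r) ->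
  (size zs)%:R <= 1 + 4 * r.
Proof.
case: zs => [|z0 zs] r_ge0 uniq_zs ball_zs; first by rewrite /=; lra.
set k := Num.truncn (2 * r).
have /andP[k_le k_gt] : (k%:R <= 2 * r < k.+1%:R) by apply: truncn_itv; lra.
have dist_le z : z \in z0 :: zs -> `|z - z0| <= k%:Z.
  move=> zin; have := ball_zs z zin; have := ball_zs z0 (mem_head _ _) => b0 bz.
  suff : (`|z - z0|%:~R : R) < k.+1%:R by rewrite -[k.+1%:R]/(k.+1%:~R) ltr_int; lia.
  rewrite intr_norm rmorphB /=.
  have -> : (z%:~R - z0%:~R : R) = (z%:~R + c) - (z0%:~R + c) by ring.
  by apply: le_lt_trans (ler_normB _ _) _; lra.
pose f (z : int) := absz (z - z0 + k%:Z).
have uniq_f : uniq (map f (z0 :: zs)).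
  rewrite map_inj_in_uniq // => x y xin yin; rewrite /f => E.
  by have := dist_le x xin; have := dist_le y yin; lia.
have sub_f : {subset map f (z0 :: zs) <= iota 0 (2 * k).+1}.
  by move=> u /mapP [z zin ->]; rewrite mem_iota /f; have := dist_le z zin; lia.
have := uniq_leq_size uniq_f sub_f; rewrite size_map size_iota -(ler_nat R).
move/le_trans; apply; rewrite -addn1 natrD natrM; lra.
Qed.

Section QuadraticForm.
Variable R : realFieldType.

Definition qform {n} (Q : 'M[R]_n) (v : 'cV[R]_n) : R := (v^T *m Q *m v) 0 0.

Definition posdef {n} (Q : 'M[R]_n) := forall v : 'cV[R]_n, v != 0 -> 0 < qform Q v.

Lemma posdef_qform_ge0 {n} (Q : 'M[R]_n) v : posdef Q -> 0 <= qform Q v.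
Proof.
move=> posQ; have [->|v_neq0] := eqVneq v 0; last exact/ltW/posQ.
by rewrite /qform mulmx0 mxE.
Qed.

Section SchurComplement.
Variables (n : nat) (Q : 'M[R]_(1 + n)).

Let a := Q 0 0.
Let b : 'rV[R]_n := ursubmx Q.

Definition schur_complement := drsubmx Q - a^-1 *: (b^T *m b).
Local Notation S := schur_complement.

Hypothesis symQ : Q^T = Q.

Lemma block_sym_mx : Q = block_mx a%:M b b^T (drsubmx Q).
Proof.
rewrite -{1}[Q]submxK; congr block_mx.
  by apply/matrixP => i j; rewrite !ord1 !mxE; congr (Q _ _); apply: val_inj.
by apply/matrixP => i j; rewrite !mxE -{1}symQ mxE.
Qed.

Lemma schur_complement_sym : S^T = S.
Proof.
rewrite /S linearB /= linearZ /= trmx_mul trmxK; congr (_ - _).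
by apply/matrixP => i j; rewrite !mxE -{1}symQ mxE.
Qed.

Lemma det_schur_complement : a != 0 -> \det Q = a * \det S.
Proof.
move=> a_neq0.
have -> : Q = block_mx 1%:M 0 (a^-1 *: b^T) 1%:M *m block_mx a%:M b 0 S.
  rewrite mulmx_block !mul0mx !mul1mx !addr0 -scalemxAl mul_mx_scalar scalerA.
  by rewrite mulVf // scale1r /S scalemxAl addrC subrK -block_sym_mx.
by rewrite det_mulmx det_lblock det_ublock !det1 !mul1r det_scalar1.
Qed.

Lemma qform_col_mx (x : R) (w : 'cV[R]_n) : a != 0 ->
  qform Q (col_mx x%:M w) = a * (x + a^-1 * (b *m w) 0 0) ^+ 2 + qform S w.
Proof.
move=> a_neq0.
have qS : qform S w = qform (drsubmx Q) w - a^-1 * ((b *m w) 0 0) ^+ 2.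
  rewrite /qform /S mulmxBr mulmxBl -scalemxAr -scalemxAl !mulmxA.
  rewrite -[w^T *m b^T]trmx_mul -[_ *m b *m w]mulmxA !mxE big_ord1 !mxE.
  by rewrite expr2.
rewrite qS; set y := (b *m w) 0 0; set q := qform (drsubmx Q) w.
have wb_y : \sum_(j < n) w^T 0 j * b^T j 0 = y.
  by rewrite /y mxE; apply: eq_bigr => j _; rewrite !mxE mulrC.
have bDw : \sum_(j < n) (x *: b + w^T *m drsubmx Q) 0 j * w j 0 = x * y + q.
  rewrite /y /q /qform !mxE mulr_sumr -big_split.
  by apply: eq_bigr => j _; rewrite !mxE mulrDl mulrA.
rewrite /qform {1}block_sym_mx tr_col_mx tr_scalar_mx mul_row_block mul_row_col.
rewrite !mxE !big_ord1 !mxE eqxx !mulr1n mul_scalar_mx wb_y bDw big_ord1 !mxE !mulr1n.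
by field.
Qed.

Lemma posdef_corner_gt0 : posdef Q -> 0 < a.
Proof.
move=> posQ; have e1_neq0 : col_mx (1%:M : 'M[R]_1) (0 : 'cV_n) != 0.
  by rewrite col_mx_eq0 negb_and oner_neq0.
have := posQ _ e1_neq0.
rewrite /qform {1}block_sym_mx tr_col_mx mul_row_block mul_row_col.
by rewrite !(mulmx0, mul0mx, trmx0, addr0) trmx1 mul1mx mulmx1 mxE eqxx.
Qed.

Lemma schur_complement_diag_le k : 0 < a -> S k k <= Q (rshift 1 k) (rshift 1 k).
Proof.
move=> a_gt0; rewrite /S !mxE big_ord1 !mxE -expr2 lerBlDr lerDl.
by rewrite mulr_ge0 ?sqr_ge0 ?invr_ge0 ?ltW.
Qed.

Lemma posdef_schur_complement : posdef Q -> posdef S.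
Proof.
move=> posQ w w_neq0; have a_gt0 := posdef_corner_gt0 posQ.
have := posQ (col_mx (- (a^-1 * (b *m w) 0 0))%:M w).
rewrite qform_col_mx ?gt_eqF // addNr expr0n /= mulr0 add0r; apply.
by rewrite col_mx_eq0 negb_and w_neq0 orbT.
Qed.

End SchurComplement.

Lemma posdef_det_gt0 n (Q : 'M[R]_n) : Q^T = Q -> posdef Q -> 0 < \det Q.
Proof.
elim: n Q => [|n IHn] Q symQ posQ; first by rewrite det_mx00.
have a_gt0 := posdef_corner_gt0 symQ posQ.
rewrite (det_schur_complement symQ) ?gt_eqF // mulr_gt0 // IHn //.
  exact: schur_complement_sym.
exact: posdef_schur_complement.
Qed.

End QuadraticForm.

Section LatticePoints.
Variable R : realType.

Lemma intvec_col_mx n (y : 'cV[int]_(1 + n)) :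
  intvec R y = col_mx (y 0 0)%:~R%:M (intvec R (dsubmx y)).
Proof.
apply/colP => i; rewrite !mxE; case: splitP => j ij; rewrite !mxE.
  rewrite ord1 eqxx mulr1n; congr (_ %:~R); congr (y _ _).
  by apply: val_inj; rewrite /= ij ord1.
by congr (_ %:~R); congr (y _ _); apply: val_inj.
Qed.

Lemma count_fiber_le n (Q : 'M[R]_(1 + n)) r2 (s : seq 'cV[int]_(1 + n)) w :
  Q^T = Q -> posdef Q -> uniq s -> (forall y, y \in s -> qform Q (intvec R y) <= r2) ->
  (count (fun y => dsubmx y == w) s)%:R <= 1 + 4 * Num.sqrt (r2 / Q 0 0).
Proof.
move=> symQ posQ uniq_s ellips_s; have a_gt0 := posdef_corner_gt0 symQ posQ.
rewrite -size_filter -(size_map (fun y : 'cV[int]_(1 + n) => y 0 0)).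
apply: (uniq_int_ball_size_le (c := (Q 0 0)^-1 * (ursubmx Q *m intvec R w) 0 0)).
- exact: sqrtr_ge0.
- rewrite map_inj_in_uniq ?filter_uniq // => y1 y2.
  rewrite !mem_filter => /andP[/eqP y1w _] /andP[/eqP y2w _] y12.
  rewrite -(vsubmxK y1) -(vsubmxK y2) y1w y2w; congr col_mx.
  apply/matrixP => i j; rewrite !ord1 !mxE.
  by have -> : lshift n (0 : 'I_1) = 0 by apply: val_inj.
move=> z /mapP [y]; rewrite mem_filter => /andP[/eqP yw ys] ->.
have := ellips_s y ys; rewrite intvec_col_mx yw qform_col_mx ?gt_eqF //.
have := posdef_qform_ge0 (intvec R w) (posdef_schur_complement symQ posQ).
move=> qS_ge0 ellips_y; rewrite -sqrtr_sqr; apply: ler_wsqrtr.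
rewrite ler_pdivlMr //; lra.
Qed.

Lemma fiber_bound_sqr_le (a r2 : R) : 0 < a -> a <= 2 * r2 ->
  (1 + 4 * Num.sqrt (r2 / a)) ^+ 2 * a <= 36 * r2.
Proof.
move=> a_gt0 a_le; have r2_ge0 : 0 <= r2 by lra.
have sq_ge0 := sqrtr_ge0 (r2 / a).
have sq2 : Num.sqrt (r2 / a) ^+ 2 * a = r2.
  by rewrite sqr_sqrtr ?divfK ?gt_eqF // divr_ge0 // ltW.
set sq := Num.sqrt (r2 / a) in sq_ge0 sq2 *; nra.
Qed.

(* The points of s with a given tail w lie on a line, in an interval of length
   2 (r2 / a)^(1/2) where a = Q 0 0, and their tails lie in the ellipsoid of the
   Schur complement, whose determinant is det Q / a. *)
Lemma lattice_points_ellipsoid n (Q : 'M[R]_n) r2 (s : seq 'cV[int]_n) :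
  Q^T = Q -> posdef Q -> (forall k, Q k k <= 2 * r2) -> uniq s ->
  (forall y, y \in s -> qform Q (intvec R y) <= r2) ->
  (size s)%:R ^+ 2 * \det Q <= (36 * r2) ^+ n.
Proof.
elim: n Q s => [|n IHn] Q s symQ posQ diagQ uniq_s ellips_s.
  have : (size s <= 1)%N.
    by apply: (@uniq_leq_size _ _ [:: 0]) => // y _; rewrite (flatmx0 y) inE.
  by rewrite det_mx00 mulr1 expr0 -(ler_nat R) => size_le1; rewrite exprn_ile1.
set S := schur_complement Q; have a_gt0 := posdef_corner_gt0 symQ posQ.
have symS : S^T = S := schur_complement_sym symQ.
have posS : posdef S := posdef_schur_complement symQ posQ.
set t := undup (map (fun y : 'cV[int]_(1 + n) => dsubmx y) s).
have t_bound : (size t)%:R ^+ 2 * \det S <= (36 * r2) ^+ n.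
  apply: IHn => //.
  - by move=> k; apply: le_trans (schur_complement_diag_le k a_gt0) (diagQ _).
  - exact: undup_uniq.
  move=> w; rewrite mem_undup => /mapP [y ys ->].
  apply: le_trans (ellips_s y ys); rewrite intvec_col_mx qform_col_mx ?gt_eqF // lerDr.
  by rewrite mulr_ge0 ?sqr_ge0 // ltW.
set a := Q 0 0 in a_gt0 *; set rho := 1 + 4 * Num.sqrt (r2 / a).
have s_le : (size s)%:R <= (size t)%:R * rho.
  exact: size_le_fibers (fun w => count_fiber_le w symQ posQ uniq_s ellips_s).
have rho_bound : rho ^+ 2 * a <= 36 * r2 := fiber_bound_sqr_le a_gt0 (diagQ 0).
have detS_gt0 := posdef_det_gt0 symS posS.
rewrite [leRHS]exprSr (det_schur_complement symQ) ?gt_eqF //.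
apply: le_trans (_ : ((size t)%:R * rho) ^+ 2 * (a * \det S) <= _).
  by apply: ler_wpM2r; [rewrite mulr_ge0 // ltW | rewrite !expr2 ler_pM].
rewrite (_ : _ * (a * _) = (size t)%:R ^+ 2 * \det S * (rho ^+ 2 * a)); last by ring.
by apply: ler_pM; rewrite // mulr_ge0 ?sqr_ge0 // ltW.
Qed.


End LatticePoints.

Section SpectralBounds.
Variable R : realType.

Lemma normr_le_supnorm n (v : 'cV[R]_n) k : `|v k 0| <= supnorm v.
Proof. exact: le_bigmax. Qed.

Lemma sumsq_le_supnorm n (v : 'cV[R]_n) B : supnorm v <= B ->
  \sum_k v k 0 ^+ 2 <= n%:R * B ^+ 2.
Proof.
move=> v_le; rewrite mulr_natl -[n in _ *+ n]card_ord -sumr_const.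
apply: ler_sum => k _.
have vk_le := le_trans (normr_le_supnorm v k) v_le.
by rewrite -real_normK ?num_real // ler_sqr ?nnegrE // (le_trans _ vk_le).
Qed.

Lemma qform_addC_sqr n (H : 'M[R]_n) c v : H^T = H ->
  qform (c%:M + H *m H) v = c * \sum_k v k 0 ^+ 2 + \sum_k (H *m v) k 0 ^+ 2.
Proof.
move=> symH; have HHv : v^T *m (H *m H) *m v = (H *m v)^T *m (H *m v).
  by rewrite trmx_mul symH !mulmxA.
rewrite /qform mulmxDr mulmxDl HHv mul_mx_scalar -scalemxAl !mxE.
by congr (_ * _ + _); apply: eq_bigr => k _; rewrite !mxE expr2.
Qed.

Lemma posdef_addC_sqr n (H : 'M[R]_n) c : 0 < c -> H^T = H ->
  posdef (c%:M + H *m H).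
Proof.
move=> c_gt0 symH v v_neq0; rewrite qform_addC_sqr //.
have sum_gt0 : 0 < \sum_k v k 0 ^+ 2.
  rewrite lt_def sumr_ge0 ?andbT => [|k _]; last exact: sqr_ge0.
  apply: contra v_neq0 => /eqP /psumr_eq0P sum0; apply/eqP/colP => k.
  by apply/eqP; rewrite mxE -sqrf_eq0 sum0 // => j _; rewrite sqr_ge0.
by rewrite ltr_wpDr ?sumr_ge0 // => [k _|]; [rewrite sqr_ge0 | rewrite mulr_gt0].
Qed.

Lemma addC_sqr_diag_le n (H : 'M[R]_n) c k : H^T = H ->
  (c%:M + H *m H) k k <= c + \tr (H *m H).
Proof.
move=> symH; have diag_sqr i : (H *m H) i i = \sum_j H i j ^+ 2.
  by rewrite mxE; apply: eq_bigr => j _; rewrite -{2}symH mxE expr2.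
rewrite [leLHS]mxE [c%:M k k]mxE eqxx mulr1n lerD2l /mxtrace (bigD1 k) //= lerDl.
by apply: sumr_ge0 => i _; rewrite diag_sqr sumr_ge0 // => j _; rewrite sqr_ge0.
Qed.

Lemma mxtrace_sqr_le n (H : 'M[R]_n) (lam : seq R) b :
  char_poly H = \prod_(x <- lam) ('X - x%:P) -> (forall x, x \in lam -> `|x| <= b) ->
  \tr (H *m H) <= n%:R * b ^+ 2.
Proof.
move=> charH lam_le; rewrite (mxtrace_char_poly_roots (char_poly_sqr charH)) big_map.
rewrite -(size_char_poly_roots charH) -sum1_size natr_sum mulr_suml big_seq_cond.
rewrite [leRHS]big_seq_cond; apply: ler_sum => x /andP[x_lam _]; rewrite mul1r.
by rewrite -real_normK ?num_real // ler_sqr ?nnegrE // (le_trans _ (lam_le x x_lam)).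
Qed.

Lemma sorted_abs_le_head (s : seq R) x : sorted (fun a b => `|b| <= `|a|) s ->
  x \in s -> `|x| <= `|s`_0|.
Proof.
case: s => // y s /= sorted_s; rewrite inE => /predU1P [->|x_s] //.
have trans_abs : transitive (fun a b : R => `|b| <= `|a|).
  by move=> z1 z2 z3 le21 le32; exact: le_trans le32 le21.
exact: (allP (order_path_min trans_abs sorted_s)).
Qed.

Lemma sqr_1D_prefix_prod_le (c : R) (s : seq R) i : 1 <= c -> (i <= size s)%N ->
  (1 + `|\prod_(j < i) s`_j|) ^+ 2 <= 4 * \prod_(x <- s) (c + x ^+ 2).
Proof.
move=> c_ge1 i_le; set p := \prod_(j < i) s`_j.
have factor_ge1 x : 1 <= c + x ^+ 2 by have := sqr_ge0 x; lra.
have prod_ge1 m k : 1 <= \prod_(m <= j < k) (c + s`_j ^+ 2).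
  by apply: (big_ind (fun x => 1 <= x)) => //; exact: mulr_ege1.
have p2_le : p ^+ 2 <= \prod_(0 <= j < i) (c + s`_j ^+ 2).
  rewrite /p -prodrXl big_mkord; apply: ler_prod => j _.
  by rewrite sqr_ge0 /=; have := factor_ge1 s`_j; lra.
rewrite (big_nth 0) (big_cat_nat (leq0n i) i_le) /=.
have := prod_ge1 0%N i; have := prod_ge1 i (size s).
have := normr_ge0 p; rewrite -(real_normK (num_real p)) in p2_le.
have := sqr_ge0 (`|p| - 1); nra.
Qed.

Lemma NH_sqr_mul_det_le n (H : 'M[R]_n) (lam : seq R) C B :
  H^T = H -> char_poly H = \prod_(x <- lam) ('X - x%:P) ->
  (forall x, x \in lam -> `|x| <= C * B) -> 1 <= C -> 1 <= B ->
  (NH H B)%:R ^+ 2 * \det ((C ^+ 2)%:M + H *m H) <=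
    (36 * (n%:R * (C ^+ 2 + 1))) ^+ n * (B ^+ n) ^+ 2.
Proof.
move=> symH charH lam_le C_ge1 B_ge1.
have C2_ge1 : 1 <= C ^+ 2 by rewrite exprn_ege1.
have B2_ge1 : 1 <= B ^+ 2 by rewrite exprn_ege1.
set r2 := n%:R * (C ^+ 2 + 1) * B ^+ 2.
have -> : (36 * (n%:R * (C ^+ 2 + 1))) ^+ n * (B ^+ n) ^+ 2 = (36 * r2) ^+ n.
  by rewrite -exprM mulnC exprM -exprMn /r2; congr (_ ^+ n); ring.
rewrite /NH -size_filter.
apply: (lattice_points_ellipsoid _ _ _ (filter_uniq _ (undup_uniq _))).
- by rewrite linearD /= tr_scalar_mx trmx_mul symH.
- by apply: posdef_addC_sqr; rewrite // (lt_le_trans ltr01).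
- move=> k; have n_ge1 : 1 <= n%:R :> R by rewrite ler1n (leq_ltn_trans _ (ltn_ord k)).
  apply: le_trans (addC_sqr_diag_le _ k symH) _.
  have := mxtrace_sqr_le charH lam_le; have : 1 <= n%:R * B ^+ 2 by rewrite mulr_ege1.
  rewrite exprMn /r2; nra.
move=> y; rewrite mem_filter => /andP[/andP[y_le Hy_le] _]; rewrite qform_addC_sqr //.
have := sumsq_le_supnorm y_le; have := sumsq_le_supnorm Hy_le; rewrite /r2; nra.
Qed.

End SpectralBounds.

Theorem lemma2p1 (R : realType) (n : nat) (C : R) : 1 <= C ->
  exists A : R, forall (H : 'M[R]_n) (lam : seq R) (B : R),
    H^T = H ->
    (* lam = eigenvalues of H with multiplicity ... *)
    char_poly H = \prod_(x <- lam) ('X - x%:P) ->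
    (* ... listed in order of decreasing absolute value *)
    sorted (fun a b => `|b| <= `|a|) lam ->
    1 <= B ->
    `|lam`_0| <= C * B ->
    forall i : nat, (1 <= i <= n)%N ->
      (NH H B)%:R <= A * (B ^+ n / (1 + `|\prod_(j < i) lam`_j|)).
Proof.
move=> C_ge1; set K := (36 * (n%:R * (C ^+ 2 + 1))) ^+ n; exists (2 * K).
move=> H lam B symH charH sorted_lam B_ge1 lam0_le i /andP[i_ge1 i_le_n].
have K_ge1 : 1 <= K.
  rewrite exprn_ege1 //; have := sqr_ge0 C; have : 1 <= n%:R :> R.
    by rewrite ler1n (leq_trans i_ge1).
  nra.
have lam_le x : x \in lam -> `|x| <= C * B.
  by move=> x_lam; apply: le_trans (sorted_abs_le_head sorted_lam x_lam) lam0_le.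
have := NH_sqr_mul_det_le symH charH lam_le C_ge1 B_ge1.
rewrite (det_char_poly_roots (char_poly_addC (char_poly_sqr charH) _)) !big_map -/K.
rewrite -(size_char_poly_roots charH) in i_le_n.
have := sqr_1D_prefix_prod_le (exprn_ege1 2 C_ge1) i_le_n.
set N := (NH H B)%:R; set q := `|_|; set D := \prod_(x <- lam) _; set X := B ^+ n.
move=> q_le N_le; have q_ge0 : 0 <= q := normr_ge0 _.
have X_ge0 : 0 <= X by rewrite exprn_ge0 // (le_trans ler01).
rewrite mulrA ler_pdivlMr ?ltr_wpDr // -ler_sqr ?nnegrE ?mulr_ge0 ?addr_ge0 //; last lra.
apply: le_trans (_ : N ^+ 2 * (4 * D) <= _).
  by rewrite exprMn ler_wpM2l ?sqr_ge0.
by have := sqr_ge0 X; rewrite !exprMn; nra.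
Qed.
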